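(* Let $G$ be a group with finite generating set $S$ and let $\Gamma$ be a tileset graph for $(G,S)$. The following are equivalent: (1) $\Gamma$ admits a bi-infinite snake; (2) $\Gamma$ admits a one-way infinite snake; (3) $\Gamma$ admits a snake of every length.
   Context: A tileset graph for $(G,S)$ is a finite multigraph $\Gamma=(A,B)$ whose edges are triples $(a,a',s)$ with $a,a'\in A$, $s\in S\cup S^{-1}$, such that $(a,a',s)\in B$ implies $(a',a,s^{-1})\in B$. For $I$ equal to $\mathbb{Z}$, $\mathbb{N}$ or a finite integer interval $\{n,\dots,m\}$, a $\Gamma$-snake on $I$ is a pair $(\omega,\zeta)$ with $\omega:I\to G$ injective and $\zeta:I\to A$ such that whenever $i,i+1\in I$: $d\omega_i:=\omega(i)^{-1}\omega(i+1)\in S\cup S^{-1}$ and $(\zeta(i),\zeta(i+1),d\omega_i)\in B$. It is bi-infinite if $I=\mathbb{Z}$, one-way infinite if $I=\mathbb{N}$; ''a snake of every length'' means that for every $n$ there is a $\Gamma$-snake on a finite interval with at least $n$ elements. *)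

From HB Require Import structures.
From mathcomp Require Import all_boot monoid.
From Stdlib Require Import ZArith.
Set Implicit Arguments. Unset Strict Implicit. Unset Printing Implicit Defensive.
Local Open Scope group_scope.

Definition symgen (G : groupType) (S : seq G) (s : G) : Prop :=
  s \in S \/ s^-1 \in S.

Definition generates (G : groupType) (S : seq G) : Prop :=
  forall g : G, exists w : seq G,
    (forall s, s \in w -> symgen S s) /\ g = foldr (fun x y => x * y) 1 w.

Definition tileset_graph (G : groupType) (S : seq G) (A : finType)
    (B : A -> A -> G -> Prop) : Prop :=
  (forall a a' s, B a a' s -> symgen S s) /\
  (forall a a' s, B a a' s -> B a' a s^-1).

Definition snake_on (G : groupType) (S : seq G) (A : finType)
    (B : A -> A -> G -> Prop) (I : Z -> Prop) (omega : Z -> G) (zeta : Z -> A) : Prop :=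
  (forall i j, I i -> I j -> omega i = omega j -> i = j) /\
  (forall i, I i -> I (i + 1)%Z ->
     symgen S ((omega i)^-1 * omega (i + 1)%Z) /\
     B (zeta i) (zeta (i + 1)%Z) ((omega i)^-1 * omega (i + 1)%Z)).

Definition biinfinite_snake G S A B : Prop :=
  exists omega zeta, @snake_on G S A B (fun _ => True) omega zeta.

Definition oneway_snake G S A B : Prop :=
  exists omega zeta, @snake_on G S A B (fun i => (0 <= i)%Z) omega zeta.

Definition snakes_every_length G S A B : Prop :=
  forall k : nat, exists (n m : Z) omega zeta,
    (Z.of_nat k <= m - n + 1)%Z /\
    @snake_on G S A B (fun i => (n <= i <= m)%Z) omega zeta.

From Stdlib Require Import ZArith Lia Classical IndefiniteDescription.
From mathcomp Require Import all_boot monoid zify.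
Set Implicit Arguments. Unset Strict Implicit. Unset Printing Implicit Defensive.
Local Open Scope group_scope.

(* König's lemma.  Restricting a one-way or bi-infinite snake gives snakes of
   every length.  Conversely, translating a long snake so that its middle sits
   at index 0 with omega 0 = 1 gives "centred" snakes of every radius.  A
   centred pattern of radius k has only finitely many one-step extensions on
   both sides, since increments lie in the finite set S ∪ S^-1 and tiles in the
   finite set A; so a pattern that extends to centred snakes of every radius
   has such an extension with the same property.  Iterating yields a coherent
   sequence of patterns whose limit is a bi-infinite snake. *)

Lemma finite_antitone_witness (I : finType) (Q : I -> nat -> Prop) :
  (forall i M N, (M <= N)%N -> Q i N -> Q i M) ->
  (forall N, exists i, Q i N) -> exists i, forall N, Q i N.
Proof.
move=> Q_anti Q_ex; apply: NNPP => no_i.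
have /fin_all_exists [bad badP] : forall i, exists N, ~ Q i N.
  by move=> i; apply: not_all_ex_not => Qi; apply: no_i; exists i.
have [i Qi] := Q_ex (\max_i bad i).
by apply: (badP i); apply: Q_anti Qi; apply: leq_bigmax.
Qed.

Section Compactness.
Variables (Y : Type) (good : nat -> (Z -> Y) -> Prop).

Definition agree_below (k : nat) (f g : Z -> Y) : Prop :=
  forall i, (Z.abs i < Z.of_nat k)%Z -> f i = g i.

Definition extendable (k : nat) (f : Z -> Y) : Prop :=
  forall N, exists g, good N g /\ agree_below k f g.

Hypothesis good_antitone : forall M N f, (M <= N)%N -> good N f -> good M f.
Hypothesis good_branching : forall k f,
  exists (I : finType) (child : I -> Z -> Y), forall g,
    agree_below k f g -> good k.+1 g -> exists i, agree_below k.+1 (child i) g.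

Lemma extendable_step k f :
  extendable k f -> exists g, extendable k.+1 g /\ agree_below k f g.
Proof.
move=> ext_f; have [I [child childP]] := good_branching k f.
pose Q i N := exists g, good N g /\ agree_below k f g /\ agree_below k.+1 (child i) g.
have [i Qi] : exists i, forall N, Q i N.
  apply: finite_antitone_witness => [i M N MN [g [gN gP]] | N].
    by exists g; split => //; apply: good_antitone gN.
  have [g [gN fg]] := ext_f (maxn N k.+1).
  have [i ig] := childP g fg (good_antitone (leq_maxr _ _) gN).
  by exists i, g; split; first exact: good_antitone (leq_maxl _ _) gN.
exists (child i); split=> [N | j j_lt].
  by have [g [gN [_ ig]]] := Qi N; exists g.
have [g [_ [fg ig]]] := Qi 0%N.
by rewrite fg // ig //; lia.
Qed.

Lemma extendable_chain : (forall N, exists f, good N f) ->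
  exists fs : nat -> Z -> Y,
    forall k, extendable k (fs k) /\ agree_below k (fs k) (fs k.+1).
Proof.
move=> good_ex.
have step kf : exists g,
    extendable kf.1 kf.2 -> extendable kf.1.+1 g /\ agree_below kf.1 kf.2 g.
  have [/extendable_step [g gP] | not_ext] := classic (extendable kf.1 kf.2).
    by exists g.
  by exists kf.2 => /not_ext.
have [next nextP] := functional_choice _ step.
have [f0 _] := good_ex 0%N.
pose fix fs n := if n is n'.+1 then next (n', fs n') else f0.
suff ext_fs : forall k, extendable k (fs k).
  by exists fs => k; split; last exact: (nextP (k, fs k) (ext_fs k)).2.
elim=> [|k IH]; last exact: (nextP (k, fs k) IH).1.
by move=> N; have [g gN] := good_ex N; exists g; split=> // i; lia.
Qed.

Lemma extendable_limit : (forall N, exists f, good N f) ->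
  exists f, forall k, extendable k f.
Proof.
move=> /extendable_chain [fs fsP].
have fs_agree k m : (k <= m)%N -> agree_below k (fs k) (fs m).
  move=> /subnK <-; elim: (m - k)%N => [|d IH] i i_lt //=.
  by rewrite addSn IH //; apply: (fsP _).2; lia.
exists (fun i => fs (Z.to_nat (Z.abs i)).+1 i) => k N.
have [g [gN fg]] := (fsP k).1 N.
exists g; split=> // i i_lt; rewrite -fg //.
by apply: fs_agree; lia.
Qed.

End Compactness.

Section Snakes.
Variables (G : groupType) (S : seq G) (A : finType) (B : A -> A -> G -> Prop).

Definition symgens : seq G := S ++ map (fun s => s^-1) S.

Lemma symgen_mem s : symgen S s -> s \in symgens.
Proof.
case=> Ss; rewrite mem_cat ?Ss //.
by apply/orP; right; apply/mapP; exists s^-1; rewrite ?invgK.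
Qed.

Lemma symgenV s : symgen S s -> symgen S s^-1.
Proof. by case=> Ss; [right; rewrite invgK | left]. Qed.

Lemma snake_on_sub (I J : Z -> Prop) w z :
  (forall i, I i -> J i) -> snake_on S B J w z -> snake_on S B I w z.
Proof.
by move=> IJ [inj edge]; split=> [i j Ii Ij | i Ii Ii1]; [apply: inj | apply: edge]; auto.
Qed.

Lemma snake_on_eq (I : Z -> Prop) (f g : Z -> G * A) :
  (forall i, I i -> f i = g i) ->
  snake_on S B I (fun i => (f i).1) (fun i => (f i).2) ->
  snake_on S B I (fun i => (g i).1) (fun i => (g i).2).
Proof.
move=> fg [inj edge]; split=> [i j Ii Ij | i Ii Ii1]; rewrite -!fg //.
  exact: inj.
exact: edge.
Qed.

Lemma snake_on_shift (I : Z -> Prop) w z (g : G) (d : Z) :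
  snake_on S B I w z ->
  snake_on S B (fun i => I (i + d)%Z) (fun i => g * w (i + d)%Z) (fun i => z (i + d)%Z).
Proof.
move=> [inj edge]; split=> [i j Ii Ij /mulgI /inj | i Ii Ii1].
  by move=> /(_ Ii Ij); lia.
rewrite invgM -mulgA mulKg (_ : (i + 1 + d = i + d + 1)%Z) in Ii1 * ; last lia.
exact: edge.
Qed.

Lemma snake_on_radii w z :
  (forall N : nat, snake_on S B (fun i => Z.abs i <= Z.of_nat N)%Z w z) ->
  snake_on S B (fun _ => True) w z.
Proof.
move=> snake; split=> [i j _ _ | i _ _].
  by apply: (snake (Z.to_nat (Z.abs i + Z.abs j))).1; lia.
by apply: (snake (Z.to_nat (Z.abs i + 1))).2; lia.
Qed.

Definition centred_snake (N : nat) (f : Z -> G * A) : Prop :=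
  snake_on S B (fun i => Z.abs i <= Z.of_nat N)%Z (fun i => (f i).1) (fun i => (f i).2)
  /\ (f 0%Z).1 = 1.

Lemma centred_snake_antitone M N f :
  (M <= N)%N -> centred_snake N f -> centred_snake M f.
Proof. by move=> MN [snake f0]; split=> //; apply: snake_on_sub snake => i; lia. Qed.

Lemma centred_snakes_of_every_length :
  snakes_every_length S B -> forall N, exists f, centred_snake N f.
Proof.
move=> every N; have [n [m [w [z [len snake]]]]] := every (2 * N + 1)%N.
pose d := (n + Z.of_nat N)%Z.
exists (fun i => ((w d)^-1 * w (i + d)%Z, z (i + d)%Z)); split=> /=.
  by apply: snake_on_sub (snake_on_shift (w d)^-1 d snake) => i; lia.
exact: mulVg.
Qed.

Lemma centred_snake_branching k f :
  exists (I : finType) (child : I -> Z -> G * A), forall g,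
    agree_below k f g -> centred_snake k.+1 g -> exists i, agree_below k.+1 (child i) g.
Proof.
case: k => [|n].
  (* At level 0 only the tile at index 0 is free, as omega 0 = 1. *)
  exists A, (fun a _ => (1, a)) => g _ [_ g0]; exists (g 0%Z).2 => i i_lt.
  have -> : i = 0%Z by lia.
  by rewrite -g0 -surjective_pairing.
move Kn: (Z.of_nat n.+1) => K.
pose child (c : (A * seq_sub symgens) * (A * seq_sub symgens)) i :=
  if (i =? K)%Z then ((f (K - 1)%Z).1 * ssval c.1.2, c.1.1)
  else if (i =? - K)%Z then ((f (1 - K)%Z).1 * ssval c.2.2, c.2.1)
  else f i.
exists ((A * seq_sub symgens) * (A * seq_sub symgens))%type, child.
move=> g fg [[_ edge] _].
have [right _] := edge (K - 1)%Z ltac:(lia) ltac:(lia).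
have [left _] := edge (- K)%Z ltac:(lia) ltac:(lia).
rewrite (_ : (K - 1 + 1 = K)%Z) in right; last lia.
rewrite (_ : (- K + 1 = 1 - K)%Z) in left; last lia.
move/symgenV: left; rewrite invgM invgK => left.
exists (((g K).2, SeqSub (symgen_mem right)), ((g (- K)%Z).2, SeqSub (symgen_mem left))).
move=> i i_lt; rewrite /child.
case: Z.eqb_spec => [-> | ne_K].
  by rewrite fg; [rewrite /= mulVKg -surjective_pairing | lia].
case: Z.eqb_spec => [-> | ne_negK].
  by rewrite fg; [rewrite /= mulVKg -surjective_pairing | lia].
by apply: fg; lia.
Qed.

Lemma biinfinite_of_every_length :
  snakes_every_length S B -> biinfinite_snake S B.
Proof.
move=> /centred_snakes_of_every_length every.
have [f ext_f] :=
  extendable_limit centred_snake_antitone centred_snake_branching every.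
exists (fun i => (f i).1), (fun i => (f i).2); apply: snake_on_radii => N.
have [g [[snake _] fg]] := ext_f N.+1 N.
by apply: snake_on_eq snake => i i_le; rewrite fg //; lia.
Qed.

End Snakes.

Theorem proposition1 (G : groupType) (S : seq G) (A : finType)
    (B : A -> A -> G -> Prop) :
  generates S -> tileset_graph S B ->
  (biinfinite_snake S B <-> oneway_snake S B) /\
  (oneway_snake S B <-> snakes_every_length S B).
Proof.
move=> _ _.
have bi_one : biinfinite_snake S B -> oneway_snake S B.
  by move=> [w [z snake]]; exists w, z; apply: snake_on_sub snake.
have one_every : oneway_snake S B -> snakes_every_length S B.
  move=> [w [z snake]] k; exists 0%Z, (Z.of_nat k), w, z.
  by split; [lia | apply: snake_on_sub snake => i; lia].
have every_bi := @biinfinite_of_every_length G S A B.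
tauto.
Qed.
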